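(* Let $(D,\mathrm{left},\mathrm{right})$ be an interval domain and consider the poset $(\max(D),\le)$, with $\ll$, $\Downarrow$, $\Uparrow$, $\bigvee$, $\bigwedge$ computed in $(\max(D),\le)$. Then: (i) for every $x\in\max(D)$, the set $\Downarrow x$ is $\le$-directed with $\bigvee\Downarrow x=x$; (ii) for all $a,b\in\max(D)$: $a\ll b$ iff for every $\le$-filtered $S\subseteq\max(D)$ having an infimum, $\bigwedge S\le a$ implies $s\le b$ for some $s\in S$; (iii) for every $x\in\max(D)$, the set $\Uparrow x$ is $\le$-filtered with $\bigwedge\Uparrow x=x$. Thus $(\max(D),\le)$ is a bicontinuous poset.
   Context: For a poset $(P,\sqsubseteq)$: directed (resp. filtered) sets are nonempty sets in which any two elements have an upper (resp. lower) bound in the set; $\bigsqcup S$ is the supremum; $x\ll y$ iff for every directed $S\subseteq P$ with a supremum, $y\sqsubseteq\bigsqcup S$ implies $x\sqsubseteq s$ for some $s\in S$; $\Uparrow x=\{a: x\ll a\}$, $\Downarrow x=\{a:a\ll x\}$. $P$ is continuous if there is $B\subseteq P$ such that for each $x$, $B\cap\Downarrow x$ contains a directed set with supremum $x$. A continuous poset is bicontinuous if (1) $x\ll y$ iff for every filtered $S$ having an infimum, $\bigwedge S\sqsubseteq x$ implies $s\sqsubseteq y$ for some $s\in S$; and (2) each $\Uparrow x$ is filtered with infimum $x$. A continuous dcpo is a continuous poset in which every directed set has a supremum. $\max(P)$ is the set of maximal elements, $x\sqcap y$ the infimum of $\{x,y\}$. The Scott topology consists of upper sets $U$ such that $\bigsqcup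 S\in U$ implies $S\cap U\ne\emptyset$ for directed $S$. An interval poset is a poset $D$ with functions $\mathrm{left},\mathrm{right}:D\to\max(D)$ such that (only named infima are assumed to exist): (i) $x=\mathrm{left}(x)\sqcap\mathrm{right}(x)$ for all $x$; (ii) if $\mathrm{right}(x)=\mathrm{left}(y)$ then $\mathrm{left}(x\sqcap y)=\mathrm{left}(x)$ and $\mathrm{right}(x\sqcap y)=\mathrm{right}(y)$; (iii) for $p\in\max(D)$ with $x\sqsubseteq p$: $\mathrm{left}(\mathrm{left}(x)\sqcap p)=\mathrm{left}(x)$, $\mathrm{right}(\mathrm{left}(x)\sqcap p)=p$, $\mathrm{left}(p\sqcap\mathrm{right}(x))=p$, $\mathrm{right}(p\sqcap\mathrm{right}(x))=\mathrm{right}(x)$. On $\max(D)$ define $a\le b$ iff $a=\mathrm{left}(z)$, $b=\mathrm{right}(z)$ for some $z\in D$; this is a partial order. For $p,q\in\max(D)$ let $[p,\cdot]=\mathrm{left}^{-1}(p)$ and $[\cdot,q]=\mathrm{right}^{-1}(q)$, regarded as subposets of $D$. An interval domain is an interval poset $(D,\mathrm{left},\mathrm{right})$ such that $D$ is a continuous dcpo and: (i) if $p\in\Uparrow x\cap\max(D)$ then $\Uparrow(\mathrm{left}(x)\sqcap p)\ne\emptyset$ and $\Uparrow(p\sqcap\mathrm{right}(x))\ne\emptyset$; (ii) for all $x\in D$ the following are equivalent: (a) $\Uparrow x\ne\emptyset$; (b) for all $y\in[\mathrm{left}(x),\cdot]$ with $y\sqsubseteq x$, $y\ll\mathrm{right}(y)$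 in the poset $[\cdot,\mathrm{right}(y)]$; (c) for all $y\in[\cdot,\mathrm{right}(x)]$ with $y\sqsubseteq x$, $y\ll\mathrm{left}(y)$ in the poset $[\mathrm{left}(y),\cdot]$; (iii)(a) for every directed $S\subseteq[p,\cdot]$, $\mathrm{left}(\bigsqcup S)=p$ and $\mathrm{right}(\bigsqcup S)=\mathrm{right}(\bigsqcup T)$ for every directed $T\subseteq[q,\cdot]$ with $\mathrm{right}(T)=\mathrm{right}(S)$ (images); (iii)(b) for every directed $S\subseteq[\cdot,q]$, $\mathrm{right}(\bigsqcup S)=q$ and $\mathrm{left}(\bigsqcup S)=\mathrm{left}(\bigsqcup T)$ for every directed $T\subseteq[\cdot,p]$ with $\mathrm{left}(T)=\mathrm{left}(S)$; (iv) for all $x\in D$, $\{y\in\max(D): x\sqsubseteq y\}$ is compact in the relative Scott topology. *)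

(* Posets are given by a carrier predicate
   [P : T -> Prop] together with a relation [R : T -> T -> Prop];
   subsets are predicates [T -> Prop].  All order-theoretic notions
   (suprema, way-below, ...) are computed inside the subposet (P, R). *)
From Stdlib Require Import List.

Definition full {T : Type} : T -> Prop := fun _ => True.

Definition subset {T : Type} (A B : T -> Prop) : Prop := forall x, A x -> B x.

Definition partial_order_on {T : Type} (P : T -> Prop) (R : T -> T -> Prop) : Prop :=
  (forall x, P x -> R x x) /\
  (forall x y, P x -> P y -> R x y -> R y x -> x = y) /\
  (forall x y z, P x -> P y -> P z -> R x y -> R y z -> R x z).

Definition directed {T : Type} (R : T -> T -> Prop) (S : T -> Prop) : Prop :=
  (exists x, S x) /\
  (forall x y, S x -> S y -> exists z, S z /\ R x z /\ R y z).

Definition filtered {T : Type} (R : T -> T -> Prop) (S : T -> Prop) : Prop :=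
  (exists x, S x) /\
  (forall x y, S x -> S y -> exists z, S z /\ R z x /\ R z y).

Definition is_ub {T : Type} (R : T -> T -> Prop) (S : T -> Prop) (u : T) : Prop :=
  forall s, S s -> R s u.

Definition is_lb {T : Type} (R : T -> T -> Prop) (S : T -> Prop) (u : T) : Prop :=
  forall s, S s -> R u s.

Definition is_sup_in {T : Type} (P : T -> Prop) (R : T -> T -> Prop)
  (S : T -> Prop) (u : T) : Prop :=
  P u /\ is_ub R S u /\ (forall v, P v -> is_ub R S v -> R u v).

Definition is_inf_in {T : Type} (P : T -> Prop) (R : T -> T -> Prop)
  (S : T -> Prop) (u : T) : Prop :=
  P u /\ is_lb R S u /\ (forall v, P v -> is_lb R S v -> R v u).

Definition way_below_in {T : Type} (P : T -> Prop) (R : T -> T -> Prop) (x y : T) : Prop :=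
  forall S : T -> Prop, subset S P -> directed R S ->
  forall s, is_sup_in P R S s -> R y s -> exists z, S z /\ R x z.

Definition ddarrow_in {T : Type} (P : T -> Prop) (R : T -> T -> Prop) (x : T) : T -> Prop :=
  fun a => P a /\ way_below_in P R a x.

Definition uuarrow_in {T : Type} (P : T -> Prop) (R : T -> T -> Prop) (x : T) : T -> Prop :=
  fun a => P a /\ way_below_in P R x a.

Definition continuous_poset {T : Type} (P : T -> Prop) (R : T -> T -> Prop) : Prop :=
  partial_order_on P R /\
  exists B : T -> Prop, subset B P /\
    forall x, P x -> exists S : T -> Prop,
      subset S (fun a => B a /\ ddarrow_in P R x a) /\ directed R S /\ is_sup_in P R S x.

Definition bicontinuous_poset {T : Type} (P : T -> Prop) (R : T -> T -> Prop) : Prop :=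
  continuous_poset P R /\
  (forall x y, P x -> P y ->
     (way_below_in P R x y <->
      forall S : T -> Prop, subset S P -> filtered R S ->
      forall m, is_inf_in P R S m -> R m x -> exists s, S s /\ R s y)) /\
  (forall x, P x -> filtered R (uuarrow_in P R x) /\ is_inf_in P R (uuarrow_in P R x) x).

Definition continuous_dcpo {T : Type} (P : T -> Prop) (R : T -> T -> Prop) : Prop :=
  continuous_poset P R /\
  forall S : T -> Prop, subset S P -> directed R S -> exists s, is_sup_in P R S s.

Definition maximal {D : Type} (le : D -> D -> Prop) (x : D) : Prop :=
  forall y, le x y -> y = x.

Definition is_inf2 {D : Type} (le : D -> D -> Prop) (x y z : D) : Prop :=
  is_inf_in full le (fun w => w = x \/ w = y) z.

Definition scott_open {D : Type} (le : D -> D -> Prop) (U : D -> Prop) : Prop :=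
  (forall x y, U x -> le x y -> U y) /\
  (forall (S : D -> Prop) s, directed le S -> is_sup_in full le S s -> U s ->
     exists z, S z /\ U z).

Definition relatively_scott_compact {D : Type} (le : D -> D -> Prop) (K : D -> Prop) : Prop :=
  forall (I : Type) (V : I -> D -> Prop),
    (forall i, exists U, scott_open le U /\ forall y, V i y <-> (U y /\ K y)) ->
    (forall y, K y -> exists i, V i y) ->
    exists l : list I, forall y, K y -> exists i, In i l /\ V i y.

Definition interval_poset {D : Type} (le : D -> D -> Prop) (left right : D -> D) : Prop :=
  partial_order_on full le /\
  (forall x, maximal le (left x) /\ maximal le (right x)) /\
  (forall x, is_inf2 le (left x) (right x) x) /\
  (forall x y, right x = left y ->
     exists z, is_inf2 le x y z /\ left z = left x /\ right z = right y) /\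
  (forall x p, maximal le p -> le x p ->
     (exists z, is_inf2 le (left x) p z /\ left z = left x /\ right z = p) /\
     (exists z, is_inf2 le p (right x) z /\ left z = p /\ right z = right x)).

Definition max_le {D : Type} (left right : D -> D) (a b : D) : Prop :=
  exists z, left z = a /\ right z = b.

Definition interval_domain {D : Type} (le : D -> D -> Prop) (left right : D -> D) : Prop :=
  interval_poset le left right /\
  continuous_dcpo full le /\
  (forall x p, maximal le p -> way_below_in full le x p ->
     (forall z, is_inf2 le (left x) p z -> exists w, way_below_in full le z w) /\
     (forall z, is_inf2 le p (right x) z -> exists w, way_below_in full le z w)) /\
  (forall x,
     let a := exists w, way_below_in full le x w in
     let b := forall y, left y = left x -> le y x ->
                way_below_in (fun w => right w = right y) le y (right y) in
     let c := forall y, right y = right x -> le y x ->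
                way_below_in (fun w => left w = left y) le y (left y) in
     (a <-> b) /\ (a <-> c)) /\
  (forall p q (S : D -> Prop), maximal le p -> maximal le q ->
     directed le S -> subset S (fun w => left w = p) ->
     forall s, is_sup_in full le S s ->
       left s = p /\
       (forall (T : D -> Prop) t, directed le T -> subset T (fun w => left w = q) ->
          (forall r, (exists u, S u /\ right u = r) <-> (exists u, T u /\ right u = r)) ->
          is_sup_in full le T t -> right s = right t)) /\
  (forall p q (S : D -> Prop), maximal le p -> maximal le q ->
     directed le S -> subset S (fun w => right w = q) ->
     forall s, is_sup_in full le S s ->
       right s = q /\
       (forall (T : D -> Prop) t, directed le T -> subset T (fun w => right w = p) ->
          (forall r, (exists u, S u /\ left u = r) <-> (exists u, T u /\ left u = r)) ->
          is_sup_in full le T t -> left s = left t)) /\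
  (forall x, relatively_scott_compact le (fun y => maximal le y /\ le x y)).

(* An element z of D is the meet of its end points left z and right z, and
   z lies below w as soon as [left w, right w] is nested in [left z, right z]
   for the order of max(D).  Hence directed sets of intervals with a common
   right end point behave like directed sets of their left end points, and,
   using axiom (iii), the equivalence (ii)(a) <-> (ii)(b) says precisely that
   something is way above z iff left z << right z in max(D).  With axiom (i),
   the left end points of a basis of x lie in the way-below set of x in
   max(D) and form a directed set with supremum x there.  Exchanging left and
   right gives again an interval domain, whose order on max(D) is the
   opposite one: (ii)(a) <-> (ii)(c) then yields the characterisation of <<
   by filtered sets, and the way-above set of x becomes the way-below set of
   x for the opposite order. *)

From Stdlib Require Import Program.Basics FunctionalExtensionality PropExtensionality.

Definition image {A B : Type} (f : A -> B) (S : A -> Prop) : B -> Prop :=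
  fun b => exists a, S a /\ f a = b.

Definition co_way_below_in {T : Type} (P : T -> Prop) (R : T -> T -> Prop) (x y : T) : Prop :=
  forall S : T -> Prop, subset S P -> filtered R S ->
  forall m, is_inf_in P R S m -> R m x -> exists s, S s /\ R s y.

Definition intervals_ending {D : Type} (left right : D -> D) (A : D -> Prop) (v : D) : D -> Prop :=
  fun w => right w = v /\ A (left w).

Definition way_below_right_fibre {D : Type} (le : D -> D -> Prop) (left right : D -> D) (z : D) :
  Prop :=
  forall y, left y = left z -> le y z ->
    way_below_in (fun w => right w = right y) le y (right y).

Lemma is_inf2_lb {D : Type} (le : D -> D -> Prop) a b z :
  is_inf2 le a b z -> le z a /\ le z b.
Proof. intros [_ [Hlb _]]. split; apply Hlb; auto. Qed.

Lemma is_inf2_glb {D : Type} (le : D -> D -> Prop) a b z w :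
  is_inf2 le a b z -> le w a -> le w b -> le w z.
Proof. intros [_ [_ Hglb]] Ha Hb. apply Hglb; [exact I|]. intros s [-> | ->]; auto. Qed.

Lemma is_inf2_sym {D : Type} (le : D -> D -> Prop) a b z :
  is_inf2 le a b z -> is_inf2 le b a z.
Proof.
  intros Hz. destruct (is_inf2_lb le a b z Hz) as [Ha Hb].
  split; [exact I | split].
  - intros s [-> | ->]; auto.
  - intros w _ Hw. apply (is_inf2_glb le a b); [exact Hz | apply Hw..]; auto.
Qed.

Lemma way_below_in_le {T : Type} (P : T -> Prop) (R : T -> T -> Prop) x y :
  (forall a, P a -> R a a) -> P y -> way_below_in P R x y -> R x y.
Proof.
  intros Hrefl Py Hxy.
  destruct (Hxy (fun w => w = y)) with (s := y) as [z [-> Hz]]; auto.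
  - intros w ->; exact Py.
  - split; [exists y; reflexivity|].
    intros a b -> ->; exists y; auto.
  - split; [exact Py | split].
    + intros w ->; auto.
    + intros v _ Hv; apply Hv; reflexivity.
Qed.

Lemma ddarrow_directed_sup {T : Type} (P : T -> Prop) (R : T -> T -> Prop) (L : T -> Prop) x :
  partial_order_on P R -> subset L (ddarrow_in P R x) -> directed R L -> is_sup_in P R L x ->
  directed R (ddarrow_in P R x) /\ is_sup_in P R (ddarrow_in P R x) x.
Proof.
  intros [Hrefl [_ Htrans]] HL [[c0 Hc0] HLdir] Hsup.
  pose proof Hsup as [Px [_ Hleast]].
  assert (HLP : subset L P) by (intros c Hc; apply (HL c Hc)).
  assert (Hcover : forall a, way_below_in P R a x -> exists c, L c /\ R a c).
  { intros a Ha. exact (Ha L HLP (conj (ex_intro _ c0 Hc0) HLdir) x Hsup (Hrefl x Px)). }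
  split; [split|split; [exact Px|split]].
  - exists c0; apply HL, Hc0.
  - intros a1 a2 [Pa1 Ha1] [Pa2 Ha2].
    destruct (Hcover a1 Ha1) as [c1 [Hc1 H1]], (Hcover a2 Ha2) as [c2 [Hc2 H2]].
    destruct (HLdir c1 c2 Hc1 Hc2) as [c3 [Hc3 [H13 H23]]].
    exists c3; split; [apply HL, Hc3|].
    split; [apply Htrans with c1 | apply Htrans with c2]; auto.
  - intros a [Pa Ha]. exact (way_below_in_le P R a x Hrefl Px Ha).
  - intros v Pv Hv. apply Hleast; [exact Pv|]. intros c Hc; apply Hv, HL, Hc.
Qed.

Section IntervalPoset.

Context {D : Type} {le : D -> D -> Prop} {left right : D -> D}.
Hypothesis HP : interval_poset le left right.
Local Notation R := (max_le left right).

Lemma le_refl x : le x x.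
Proof. destruct HP as [[Hrefl _] _]. apply Hrefl; exact I. Qed.

Lemma le_anti x y : le x y -> le y x -> x = y.
Proof. destruct HP as [[_ [Hanti _]] _]. intros; apply Hanti; auto; exact I. Qed.

Lemma le_trans x y z : le x y -> le y z -> le x z.
Proof. destruct HP as [[_ [_ Htrans]] _]. intros; apply Htrans with y; auto; exact I. Qed.

Lemma maximal_left x : maximal le (left x).
Proof. apply HP. Qed.

Lemma maximal_right x : maximal le (right x).
Proof. apply HP. Qed.

Lemma is_inf2_left_right x : is_inf2 le (left x) (right x) x.
Proof. apply HP. Qed.

Lemma le_left x : le x (left x).
Proof. apply (is_inf2_lb le _ _ _ (is_inf2_left_right x)). Qed.

Lemma le_right x : le x (right x).
Proof. apply (is_inf2_lb le _ _ _ (is_inf2_left_right x)). Qed.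

Lemma interval_ext z z' : left z = left z' -> right z = right z' -> z = z'.
Proof.
  intros Hl Hr. apply le_anti.
  - apply (is_inf2_glb le _ _ _ _ (is_inf2_left_right z'));
      [rewrite <- Hl; apply le_left | rewrite <- Hr; apply le_right].
  - apply (is_inf2_glb le _ _ _ _ (is_inf2_left_right z));
      [rewrite Hl; apply le_left | rewrite Hr; apply le_right].
Qed.

Lemma left_maximal p : maximal le p -> left p = p.
Proof. intros Hp. apply Hp, le_left. Qed.

Lemma right_maximal p : maximal le p -> right p = p.
Proof. intros Hp. apply Hp, le_right. Qed.

Lemma max_le_left_of_le x p : maximal le p -> le x p -> R (left x) p.
Proof.
  intros Hp Hxp. destruct HP as [_ [_ [_ [_ Hext]]]].
  destruct (Hext x p Hp Hxp) as [[z [_ [Hl Hr]]] _]. exists z; auto.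
Qed.

Lemma max_le_right_of_le x p : maximal le p -> le x p -> R p (right x).
Proof.
  intros Hp Hxp. destruct HP as [_ [_ [_ [_ Hext]]]].
  destruct (Hext x p Hp Hxp) as [_ [z [_ [Hl Hr]]]]. exists z; auto.
Qed.

Lemma max_le_refl p : maximal le p -> R p p.
Proof. intros Hp. exists p. auto using left_maximal, right_maximal. Qed.

(* [y] is the meet of [z] with an interval [right z, c] *)
Lemma widen_right z c : R (right z) c -> exists y, left y = left z /\ right y = c /\ le y z.
Proof.
  intros [w [Hwl Hwr]]. destruct HP as [_ [_ [_ [Hjoin _]]]].
  destruct (Hjoin z w (eq_sym Hwl)) as [y [Hy [Hyl Hyr]]].
  exists y. split; [exact Hyl | split; [congruence | apply (is_inf2_lb le _ _ _ Hy)]].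
Qed.

Lemma max_le_trans a b c : R a b -> R b c -> R a c.
Proof.
  intros [z [<- <-]] Hbc. destruct (widen_right z c Hbc) as [y [Hyl [Hyr _]]].
  exists y; auto.
Qed.

Lemma max_le_anti a b : R a b -> R b a -> a = b.
Proof.
  intros [z [<- <-]] Hba. destruct (widen_right z _ Hba) as [y [Hyl [Hyr Hyz]]].
  assert (Hy : y = left z).
  { apply interval_ext.
    - rewrite Hyl, (left_maximal _ (maximal_left z)); reflexivity.
    - rewrite Hyr, (right_maximal _ (maximal_left z)); reflexivity. }
  subst y. symmetry. apply (maximal_left z), le_trans with z; auto using le_right.
Qed.

Lemma max_le_partial_order : partial_order_on (maximal le) R.
Proof.
  split; [|split]; intros.
  - apply max_le_refl; assumption.
  - apply max_le_anti; assumption.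
  - apply max_le_trans with y; assumption.
Qed.

Lemma le_maximal_between z p : R (left z) p -> R p (right z) -> le z p.
Proof.
  intros [z1 [Hl1 Hr1]] Hpz. rewrite <- Hr1 in Hpz.
  destruct (widen_right z1 _ Hpz) as [y [Hyl [Hyr Hyz1]]].
  assert (y = z) by (apply interval_ext; congruence). subst y.
  apply le_trans with z1; [exact Hyz1 | rewrite <- Hr1; apply le_right].
Qed.

Lemma le_of_subinterval z w : R (left z) (left w) -> R (right w) (right z) -> le z w.
Proof.
  intros Hl Hr. assert (Hw : R (left w) (right w)) by (exists w; auto).
  apply (is_inf2_glb le _ _ _ _ (is_inf2_left_right w)); apply le_maximal_between;
    eauto using max_le_trans.
Qed.

Lemma directed_image_left S : directed le S -> directed R (image left S).
Proof.
  intros [[u0 Hu0] Hdir]. split; [exists (left u0), u0; auto|].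
  intros a1 a2 [u1 [Hu1 <-]] [u2 [Hu2 <-]].
  destruct (Hdir u1 u2 Hu1 Hu2) as [u3 [Hu3 [H13 H23]]].
  exists (left u3). split; [exists u3; auto|].
  split; apply max_le_left_of_le; eauto using maximal_left, le_trans, le_left.
Qed.

Lemma directed_intervals_ending A v :
  directed R A -> (forall a, A a -> R a v) -> directed le (intervals_ending left right A v).
Proof.
  intros [[a0 Ha0] Hdir] Hv. split.
  - destruct (Hv a0 Ha0) as [w [Hwl Hwr]]. exists w. split; [exact Hwr | rewrite Hwl; exact Ha0].
  - intros w1 w2 [Hr1 Ha1] [Hr2 Ha2].
    destruct (Hdir _ _ Ha1 Ha2) as [c [Hc [H1c H2c]]].
    destruct (Hv c Hc) as [w [Hwl Hwr]].
    exists w. split; [split; [exact Hwr | rewrite Hwl; exact Hc]|].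
    split; apply le_of_subinterval; rewrite ?Hwl, ?Hr1, ?Hr2, <- ?Hwr;
      auto using max_le_refl, maximal_right.
Qed.

Lemma image_left_intervals_ending A v :
  (forall a, A a -> R a v) -> image left (intervals_ending left right A v) = A.
Proof.
  intros Hv. apply functional_extensionality; intros a.
  apply propositional_extensionality. split.
  - intros [w [[_ Hw] <-]]. exact Hw.
  - intros Ha. destruct (Hv a Ha) as [w [Hwl Hwr]].
    exists w. split; [split; [exact Hwr | rewrite Hwl; exact Ha] | exact Hwl].
Qed.

Lemma is_sup_intervals_ending S s :
  is_sup_in (maximal le) R S s ->
  is_sup_in (fun w => right w = s) le (intervals_ending left right S s) s.
Proof.
  intros [Hs [Hub Hleast]].
  split; [apply right_maximal, Hs | split].
  - intros w [Hwr Hwl].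
    apply le_maximal_between; [apply Hub, Hwl | rewrite Hwr; apply max_le_refl, Hs].
  - intros v Hvr Hv.
    assert (Hvl : left v = s).
    { apply max_le_anti; [exists v; auto|].
      apply Hleast; [apply maximal_left|].
      intros c Hc. destruct (Hub c Hc) as [w [Hwl Hwr]]. rewrite <- Hwl.
      apply max_le_left_of_le; [apply maximal_left|].
      apply le_trans with v; [|apply le_left].
      apply Hv. split; [exact Hwr | rewrite Hwl; exact Hc]. }
    replace v with s; [apply le_refl|].
    apply interval_ext; rewrite ?Hvl, ?Hvr; auto using left_maximal, right_maximal.
Qed.

Lemma way_below_ends_of_fibre z :
  way_below_right_fibre le left right z -> way_below_in (maximal le) R (left z) (right z).
Proof.
  intros Hfib S _ Hdir s Hsup Hzs.
  destruct (widen_right z s Hzs) as [y [Hyl [Hyr Hyz]]].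
  pose proof (Hfib y Hyl Hyz) as Hy. rewrite Hyr in Hy.
  destruct (Hy (intervals_ending left right S s)) with (s := s) as [w [[_ Hwl] Hyw]].
  - intros w [Hw _]; exact Hw.
  - apply directed_intervals_ending; [exact Hdir | apply Hsup].
  - apply is_sup_intervals_ending, Hsup.
  - apply le_refl.
  - exists (left w). split; [exact Hwl|]. rewrite <- Hyl.
    apply max_le_left_of_le; [apply maximal_left | apply le_trans with w; auto using le_left].
Qed.

End IntervalPoset.


Lemma interval_poset_swap {D : Type} (le : D -> D -> Prop) (left right : D -> D) :
  interval_poset le left right -> interval_poset le right left.
Proof.
  intros [Hpo [Hmax [Hinf [Hjoin Hext]]]].
  split; [exact Hpo | split; [|split; [|split]]].
  - intros x. split; apply Hmax.
  - intros x. apply is_inf2_sym, Hinf.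
  - intros x y Hxy. destruct (Hjoin y x (eq_sym Hxy)) as [z [Hz [Hzl Hzr]]].
    exists z. split; [apply is_inf2_sym, Hz | split; assumption].
  - intros x p Hp Hxp.
    destruct (Hext x p Hp Hxp) as [[z1 [Hz1 [Hz1l Hz1r]]] [z2 [Hz2 [Hz2l Hz2r]]]].
    split; [exists z2 | exists z1]; (split; [apply is_inf2_sym; assumption | split; assumption]).
Qed.

Lemma interval_domain_swap {D : Type} (le : D -> D -> Prop) (left right : D -> D) :
  interval_domain le left right -> interval_domain le right left.
Proof.
  intros [HP [Hdcpo [Hi [Hii [Hiiia [Hiiib Hiv]]]]]].
  split; [apply interval_poset_swap, HP|].
  split; [exact Hdcpo | split; [|split; [|split; [|split]]]].
  - intros x p Hp Hxp. destruct (Hi x p Hp Hxp) as [H1 H2].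
    split; intros z Hz; [apply H2 | apply H1]; apply is_inf2_sym, Hz.
  - intros x. cbv zeta. destruct (Hii x) as [Hab Hac]. split; assumption.
  - intros p q S Hp Hq. exact (Hiiib q p S Hq Hp).
  - intros p q S Hp Hq. exact (Hiiia q p S Hq Hp).
  - exact Hiv.
Qed.

Lemma max_le_swap {D : Type} (left right : D -> D) :
  max_le right left = flip (max_le left right).
Proof.
  apply functional_extensionality; intros a. apply functional_extensionality; intros b.
  apply propositional_extensionality. unfold flip, max_le.
  split; intros [z [H1 H2]]; exists z; auto.
Qed.

Section IntervalDomain.

Context {D : Type} {le : D -> D -> Prop} {left right : D -> D}.
Hypothesis HD : interval_domain le left right.
Let HP : interval_poset le left right := proj1 HD.
Local Notation R := (max_le left right).

Lemma dcpo_sup S : directed le S -> exists t, is_sup_in full le S t.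
Proof.
  pose proof HD as [_ [[_ Hdcpo] _]].
  intros HS. apply Hdcpo; [intros ? ?; exact I | exact HS].
Qed.

Lemma is_sup_image_left_of_right_fixed S q t :
  maximal le q -> directed le S -> subset S (fun w => right w = q) -> is_sup_in full le S t ->
  is_sup_in (maximal le) R (image left S) (left t).
Proof.
  intros Hq Hdir HS Ht. pose proof HD as [_ [_ [_ [_ [_ [Hiiib _]]]]]].
  split; [apply (maximal_left HP) | split].
  - intros a [u [Hu <-]]. apply (max_le_left_of_le HP); [apply (maximal_left HP)|].
    apply (le_trans HP) with t; [apply Ht, Hu | apply (le_left HP)].
  - intros v Hv Hub.
    set (T := intervals_ending left right (image left S) v).
    assert (HTdir : directed le T)
      by (apply (directed_intervals_ending HP); [apply (directed_image_left HP)|]; assumption).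
    assert (HT : subset T (fun w => right w = v)) by (intros w [Hw _]; exact Hw).
    destruct (dcpo_sup T HTdir) as [t' Ht'].
    destruct (Hiiib v q S Hv Hq Hdir HS t Ht) as [_ Hsame].
    exists t'. split.
    + symmetry. apply (Hsame T t' HTdir HT); [|exact Ht'].
      intros r. change (image left S r <-> image left T r).
      unfold T. rewrite image_left_intervals_ending; [reflexivity | exact Hub].
    + exact (proj1 (Hiiib v v T Hv Hv HTdir HT t' Ht')).
Qed.

Lemma fibre_of_way_below_ends z :
  way_below_in (maximal le) R (left z) (right z) -> way_below_right_fibre le left right z.
Proof.
  intros Hwb y Hyl Hyz T HT Hdir t [_ [_ Hleast]] Hyt.
  pose proof HD as [_ [_ [_ [_ [_ [Hiiib _]]]]]].
  assert (Hy : maximal le (right y)) by apply (maximal_right HP).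
  apply Hy in Hyt. subst t.
  destruct (dcpo_sup T Hdir) as [t Ht].
  assert (t = right y).
  { apply Hy, Hleast; [exact (proj1 (Hiiib _ _ T Hy Hy Hdir HT t Ht)) | apply Ht]. }
  subst t.
  pose proof (is_sup_image_left_of_right_fixed T _ _ Hy Hdir HT Ht) as Hsup.
  rewrite (left_maximal HP _ Hy) in Hsup.
  destruct (Hwb (image left T)) with (s := right y) as [c [[w [Hw <-]] Hzw]].
  - intros c [w [_ <-]]; apply (maximal_left HP).
  - apply (directed_image_left HP), Hdir.
  - exact Hsup.
  - apply (max_le_right_of_le HP); [apply (maximal_right HP)|].
    apply (le_trans HP) with z; [exact Hyz | apply (le_right HP)].
  - exists w. split; [exact Hw|]. apply (le_of_subinterval HP).
    + rewrite Hyl; exact Hzw.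
    + rewrite (HT w Hw). apply (max_le_refl HP), Hy.
Qed.

Lemma way_below_ends_iff z :
  (exists w, way_below_in full le z w) <-> way_below_in (maximal le) R (left z) (right z).
Proof.
  pose proof HD as [_ [_ [_ [Hii _]]]]. destruct (Hii z) as [Hab _]. split.
  - intros Hz. exact (way_below_ends_of_fibre HP z (proj1 Hab Hz)).
  - intros Hz. exact (proj2 Hab (fibre_of_way_below_ends z Hz)).
Qed.

Lemma way_below_left_of_way_below s p :
  maximal le p -> way_below_in full le s p -> way_below_in (maximal le) R (left s) p.
Proof.
  intros Hp Hsp. pose proof HD as [_ [_ [Hi _]]]. pose proof HP as [_ [_ [_ [_ Hext]]]].
  pose proof (way_below_in_le full le s p (fun a _ => le_refl HP a) I Hsp) as Hle.
  destruct (Hext s p Hp Hle) as [[z [Hz [Hzl Hzr]]] _].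
  rewrite <- Hzl, <- Hzr. apply way_below_ends_iff, (proj1 (Hi s p Hp Hsp) z Hz).
Qed.

Lemma is_sup_image_left_of_maximal_sup S x :
  maximal le x -> directed le S -> is_sup_in full le S x ->
  is_sup_in (maximal le) R (image left S) x.
Proof.
  intros Hx Hdir Hsup.
  assert (HSx : forall a, image left S a -> R a x).
  { intros a [s [Hs <-]]. apply (max_le_left_of_le HP); [exact Hx | apply Hsup, Hs]. }
  set (T := intervals_ending left right (image left S) x).
  assert (HTdir : directed le T)
    by (apply (directed_intervals_ending HP); [apply (directed_image_left HP), Hdir | exact HSx]).
  destruct (dcpo_sup T HTdir) as [t Ht].
  assert (t = x).
  { apply Hx, Hsup; [exact I|]. intros s Hs.
    destruct (HSx (left s) (ex_intro _ s (conj Hs eq_refl))) as [w [Hwl Hwr]].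
    apply (le_trans HP) with w.
    - apply (le_of_subinterval HP); rewrite ?Hwl, ?Hwr.
      + apply (max_le_refl HP), (maximal_left HP).
      + apply (max_le_right_of_le HP); [exact Hx | apply Hsup, Hs].
    - apply Ht. split; [exact Hwr | rewrite Hwl; exists s; auto]. }
  subst t.
  pose proof (is_sup_image_left_of_right_fixed T x x Hx HTdir (fun w Hw => proj1 Hw) Ht) as H.
  unfold T in H. rewrite (left_maximal HP x Hx), image_left_intervals_ending in H.
  - exact H.
  - exact HSx.
Qed.

Lemma ddarrow_max_directed_sup x :
  maximal le x ->
  directed R (ddarrow_in (maximal le) R x) /\
  is_sup_in (maximal le) R (ddarrow_in (maximal le) R x) x.
Proof.
  intros Hx. pose proof HD as [_ [[[_ [B [_ Hcont]]] _] _]].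
  destruct (Hcont x I) as [S [HS [Hdir Hsup]]].
  apply ddarrow_directed_sup with (image left S).
  - apply (max_le_partial_order HP).
  - intros a [s [Hs <-]]. split; [apply (maximal_left HP)|].
    apply way_below_left_of_way_below; [exact Hx | apply HS, Hs].
  - apply (directed_image_left HP), Hdir.
  - apply is_sup_image_left_of_maximal_sup; assumption.
Qed.

End IntervalDomain.

Lemma way_below_ends_iff_co {D : Type} {le : D -> D -> Prop} {left right : D -> D}
  (HD : interval_domain le left right) z :
  (exists w, way_below_in full le z w) <->
  co_way_below_in (maximal le) (max_le left right) (left z) (right z).
Proof.
  change (co_way_below_in (maximal le) (max_le left right) (left z) (right z))
    with (way_below_in (maximal le) (flip (max_le left right)) (right z) (left z)).
  rewrite <- max_le_swap. exact (way_below_ends_iff (interval_domain_swap le left right HD) z).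
Qed.

Lemma way_below_max_iff_co {D : Type} {le : D -> D -> Prop} {left right : D -> D}
  (HD : interval_domain le left right) a b :
  maximal le a -> maximal le b ->
  (way_below_in (maximal le) (max_le left right) a b <->
   co_way_below_in (maximal le) (max_le left right) a b).
Proof.
  intros Ha Hb. pose proof (max_le_partial_order (proj1 HD)) as [Hrefl _].
  split; intros Hab.
  - destruct (way_below_in_le _ _ a b Hrefl Hb Hab) as [z [<- <-]].
    apply (way_below_ends_iff_co HD), (way_below_ends_iff HD), Hab.
  - destruct (way_below_in_le _ (flip (max_le left right)) b a Hrefl Ha Hab) as [z [<- <-]].
    apply (way_below_ends_iff HD), (way_below_ends_iff_co HD), Hab.
Qed.

Lemma uuarrow_max_filtered_inf {D : Type} {le : D -> D -> Prop} {left right : D -> D}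
  (HD : interval_domain le left right) x :
  maximal le x ->
  filtered (max_le left right) (uuarrow_in (maximal le) (max_le left right) x) /\
  is_inf_in (maximal le) (max_le left right) (uuarrow_in (maximal le) (max_le left right) x) x.
Proof.
  intros Hx.
  assert (Hup : uuarrow_in (maximal le) (max_le left right) x =
                ddarrow_in (maximal le) (flip (max_le left right)) x).
  { apply functional_extensionality; intros a. apply propositional_extensionality.
    split; intros [Ha Hw]; split; try exact Ha.
    - exact (proj1 (way_below_max_iff_co HD x a Hx Ha) Hw).
    - exact (proj2 (way_below_max_iff_co HD x a Hx Ha) Hw). }
  rewrite Hup.
  change (directed (flip (max_le left right))
            (ddarrow_in (maximal le) (flip (max_le left right)) x) /\
          is_sup_in (maximal le) (flip (max_le left right))
            (ddarrow_in (maximal le) (flip (max_le left right)) x) x).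
  rewrite <- max_le_swap.
  exact (ddarrow_max_directed_sup (interval_domain_swap le left right HD) x Hx).
Qed.

Theorem mainTheorem12 (D : Type) (le : D -> D -> Prop) (left right : D -> D)
  (HD : interval_domain le left right) :
  let P := maximal le in
  let R := max_le left right in
  (forall x, P x -> directed R (ddarrow_in P R x) /\ is_sup_in P R (ddarrow_in P R x) x) /\
  (forall a b, P a -> P b ->
     (way_below_in P R a b <->
      forall S : D -> Prop, subset S P -> filtered R S ->
      forall m, is_inf_in P R S m -> R m a -> exists s, S s /\ R s b)) /\
  (forall x, P x -> filtered R (uuarrow_in P R x) /\ is_inf_in P R (uuarrow_in P R x) x) /\
  bicontinuous_poset P R.
Proof.
  intros P R.
  pose proof (ddarrow_max_directed_sup HD) as HI.
  pose proof (way_below_max_iff_co HD) as HII.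
  pose proof (uuarrow_max_filtered_inf HD) as HIII.
  assert (Hcont : continuous_poset P R).
  { split; [exact (max_le_partial_order (proj1 HD))|].
    exists P. split; [intros a Ha; exact Ha|].
    intros x Hx. exists (ddarrow_in P R x).
    split; [intros a Ha; split; [apply Ha | exact Ha] | exact (HI x Hx)]. }
  split; [exact HI | split; [exact HII | split; [exact HIII |]]].
  split; [exact Hcont | split; [exact HII | exact HIII]].
Qed.
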